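(* With $\mathcal{L}=\{I_\lambda:\lambda\in\operatorname{Irr}(B)\}$ and $\mathcal{A}=\{I_\sigma:\sigma\in\operatorname{Aut}(G)\}$, one has the internal decomposition $$\operatorname{PI}(B)=(\mathcal{L}\rtimes\mathcal{A})\times\langle-\mathrm{id}\rangle,$$ where $\mathcal{L}\rtimes\mathcal{A}$ is exactly the subgroup of perfect isometries with all-positive sign, $\mathcal{L}\cong\operatorname{Irr}(B)\cong G$ and $\mathcal{A}\cong\operatorname{Aut}(G)$. Consequently $\operatorname{PI}(B)\cong (G\rtimes\operatorname{Aut}(G))\times C_2$.
   Context: Let $p$ be a prime, $\zeta$ a primitive $p$-th root of unity, $K=\mathbb{Q}_p(\zeta)$, $\mathcal{O}=\mathbb{Z}_p[\zeta]$. Let $G=\langle g\rangle$ be cyclic of order $p$, $B=\mathcal{O}G$, $\operatorname{Irr}(B)=\{\chi_0,\dots,\chi_{p-1}\}$ with $\chi_a(g^b)=\zeta^{ab}$; $\operatorname{Irr}(B)$ is a group under pointwise multiplication. $R_K(B)$ is the free abelian group on $\operatorname{Irr}(B)$ with the standard inner product. For a linear map $I$ of $R_K(B)$ put $\mu_I(x,y)=\sum_{\chi}I(\chi)(x)\chi(y)$. A generalized character $\mu$ of $G\times G$ is perfect if (i) $\mu(x,y)/|C_G(x)|,\ \mu(x,y)/|C_G(y)|\in\mathcal{O}$ for all $x,y$; (ii) whenever $\mu(x,y)\ne0$, $x$ is $p$-regular iff $y$ is. $\operatorname{PI}(B)$ is the group of bijective linear isometries $I$ of $R_K(B)$ with $\mu_I$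 perfect. $I$ has all-positive sign if $I(\chi)\in\operatorname{Irr}(B)$ for all $\chi\in\operatorname{Irr}(B)$. For $\lambda\in\operatorname{Irr}(B)$, $I_\lambda(\chi)=\lambda\chi$; for $\sigma\in\operatorname{Aut}(G)$, $I_\sigma(\chi)=\chi^\sigma$ where $\chi^\sigma(h)=\chi(h^{\sigma^{-1}})$ (extended linearly). $\operatorname{Aut}(G)$ acts on $G$ naturally in the semidirect product. *)

From HB Require Import structures.
From mathcomp Require Import all_boot all_order all_algebra all_fingroup all_solvable all_field all_character.
Set Implicit Arguments. Unset Strict Implicit. Unset Printing Implicit Defensive.
Import GRing.Theory Num.Theory.
Local Open Scope ring_scope.

(* Irr(B) = {chi_0, ..., chi_(p-1)}, chi_a (g^b) = zeta^(ab), values in algC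
   (Q(zeta) is embedded in algC; zeta a primitive p-th root of unity). *)
Definition chi (gT : finGroupType) (p : nat) (g : gT) (z : algC) (a : 'I_p)
  (x : gT) : algC :=
  \sum_(k < p) (x == (g ^+ k)%g)%:R * z ^+ (a * k).

(* An element of R_K(B) is an integer row vector u (coordinates on Irr(B));
   a linear map I of R_K(B) is an integer matrix M with
   I(chi_a) = \sum_b M a b chi_b, i.e. u |-> u *m M on coordinates. *)
Definition inner (p : nat) (u v : 'rV[int]_p) : int := \sum_(i < p) u 0 i * v 0 i.

Definition Ichi (gT : finGroupType) (p : nat) (g : gT) (z : algC)
  (M : 'M[int]_p) (a : 'I_p) (x : gT) : algC :=
  \sum_(b < p) (M a b)%:~R * chi g z b x.

Definition mu (gT : finGroupType) (p : nat) (g : gT) (z : algC)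
  (M : 'M[int]_p) (x y : gT) : algC :=
  \sum_(a < p) Ichi g z M a x * chi g z a y.

(* Membership in O = Z_p[zeta], for elements of Q(zeta) (embedded in algC):
   O \cap Q(zeta) = Z[zeta] localized at the unique prime above p. *)
Definition inO (p : nat) (w : algC) : Prop :=
  exists m : nat, coprime m p /\ (m%:R * w \in Aint).

Definition perfect (gT : finGroupType) (G : {group gT}) (p : nat) (g : gT)
  (z : algC) (M : 'M[int]_p) : Prop :=
  forall x y, x \in G -> y \in G ->
    [/\ inO p (mu g z M x y / #|('C_G[x])%g|%:R),
        inO p (mu g z M x y / #|('C_G[y])%g|%:R)
      & mu g z M x y != 0 -> ((p^'.-elt x)%g = (p^'.-elt y)%g)].

Definition isPI (gT : finGroupType) (G : {group gT}) (p : nat) (g : gT)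
  (z : algC) (M : 'M[int]_p) : Prop :=
  [/\ bijective (fun u : 'rV[int]_p => u *m M),
      (forall u v : 'rV[int]_p, inner (u *m M) (v *m M) = inner u v)
    & perfect G g z M].

Definition allpos (p : nat) (M : 'M[int]_p) : Prop :=
  forall a : 'I_p, exists b : 'I_p, forall c : 'I_p, M a c = (c == b)%:R.

Definition Lmx (gT : finGroupType) (G : {group gT}) (p : nat) (g : gT)
  (z : algC) (lam : gT -> algC) : 'M[int]_p :=
  \matrix_(a < p, b < p)
    (if [forall h in G, lam h * chi g z a h == chi g z b h] then 1 else 0).

Definition Amx (gT : finGroupType) (G : {group gT}) (p : nat) (g : gT)
  (z : algC) (s : {perm gT}) : 'M[int]_p :=
  \matrix_(a < p, b < p)
    (if [forall h in G, chi g z a ((s^-1)%g h) == chi g z b h] then 1 else 0).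

Arguments Lmx {gT} G {p} g z lam.
Arguments Amx {gT} G {p} g z s.

From HB Require Import structures.
From mathcomp Require Import all_boot all_order all_algebra all_fingroup all_solvable all_field all_character.
From mathcomp Require Import ring zify.
Import GRing.Theory Num.Theory.
Local Open Scope ring_scope.
Set Implicit Arguments. Unset Strict Implicit. Unset Printing Implicit Defensive.

(* Write a linear map I of R_K(B) as its integer matrix on the basis
   chi_0, ..., chi_(p-1), indexed by Z/p. An isometry permutes this basis up
   to signs, I(chi_a) = eps_a chi_(pi a), and perfection forces I to be
   affine. Condition (ii) at x = 1 and Fourier inversion make eps constant.
   Condition (i) at (g^t, g^(j t)), for all t, says that the power sums of
   k a = pi a + j a are divisible by p in Z_p[zeta]; as an integer divisible
   by zeta - 1 is divisible by p, all fibres of k have the same size mod p,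
   so k is constant as soon as two of its values coincide, which a suitable
   j achieves. Hence pi a = u a + c, and PI(B) consists of the matrices
   +-(chi_a |-> chi_(u a + c)) with u prime to p: the I_lambda are the
   translations, the I_sigma the dilations, and the rest is bookkeeping in
   the affine group of Z/p. *)

Section FunctionMatrix.
Variable n : nat.

Definition fun_mx (f : 'I_n -> 'I_n) : 'M[int]_n := \matrix_(a, b) (b == f a)%:R.

Lemma eq_fun_mx f h : f =1 h -> fun_mx f = fun_mx h.
Proof. by move=> fh; apply/matrixP => a b; rewrite !mxE fh. Qed.

Lemma scale_fun_mxE (k : int) f a b :
  (k *: fun_mx f) a b = if b == f a then k else 0.
Proof. by rewrite !mxE; case: eqP; rewrite ?mulr1 ?mulr0. Qed.

Lemma sum_row_delta (R : pzRingType) (M : 'M[int]_n) a i (k : int)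
    (F : 'I_n -> R) :
  (forall b, M a b = if b == i then k else 0) ->
  \sum_b (M a b)%:~R * F b = k%:~R * F i.
Proof.
move=> Ma; rewrite (bigD1 i) //= big1 ?addr0 => [|b /negbTE nbi].
  by rewrite Ma eqxx.
by rewrite Ma nbi mul0r.
Qed.

Lemma mul_fun_mx f h : fun_mx f *m fun_mx h = fun_mx (h \o f).
Proof.
apply/matrixP => a c; rewrite !mxE (bigD1 (f a)) //= big1 => [|b /negbTE nb].
  by rewrite !mxE eqxx mul1r addr0.
by rewrite !mxE nb mul0r.
Qed.

Lemma fun_mx_id : fun_mx id = 1%:M.
Proof. by apply/matrixP => a b; rewrite !mxE eq_sym. Qed.

Lemma fun_mx_orthogonal f : injective f -> fun_mx f *m (fun_mx f)^T = 1%:M.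
Proof.
move=> f_inj; apply/matrixP => a c; rewrite !mxE (bigD1 (f a)) //= big1.
  by rewrite !mxE eqxx mul1r addr0 (inj_eq f_inj) eq_sym.
by move=> b /negbTE nb; rewrite !mxE nb mul0r.
Qed.

Lemma fun_mx_inj f h : fun_mx f = fun_mx h -> f =1 h.
Proof.
move=> /matrixP fh a; have := fh a (f a); rewrite !mxE eqxx.
by case: eqP => // _ /eqP; rewrite oner_eq0.
Qed.

Lemma sign_fun_mx_inj (e e' : bool) f h : (0 < n)%N ->
  (-1) ^+ e *: fun_mx f = (-1) ^+ e' *: fun_mx h -> e = e' /\ f =1 h.
Proof.
move=> n_gt0 efh; have a := Ordinal n_gt0.
have ee' : e = e'.
  have /matrixP/(_ a (f a)) := efh; rewrite !scale_fun_mxE eqxx.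
  by case: eqP => [_ /signr_inj | _ /eqP]; rewrite ?signr_eq0.
split=> //; apply: fun_mx_inj; move: efh; rewrite ee'.
by move/(congr1 ( *:%R ((-1) ^+ e'))); rewrite !scalerA -signr_addb addbb !scale1r.
Qed.

End FunctionMatrix.

Lemma sign_orthogonal n (e : bool) (M : 'M[int]_n) : M *m M^T = 1%:M ->
  ((-1) ^+ e *: M) *m ((-1) ^+ e *: M)^T = 1%:M.
Proof.
move=> MMt; have -> : ((-1) ^+ e *: M)^T = (-1) ^+ e *: M^T.
  by apply/matrixP => i j; rewrite !mxE.
by rewrite -scalemxAl -scalemxAr scalerA -signr_addb addbb scale1r.
Qed.

Lemma orthogonal_isometry n (M : 'M[int]_n) : M *m M^T = 1%:M ->
  bijective (fun u : 'rV[int]_n => u *m M) /\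
  forall u v : 'rV[int]_n, inner (u *m M) (v *m M) = inner u v.
Proof.
move=> MMt; have innerE (u v : 'rV[int]_n) : inner u v = (u *m v^T) 0 0.
  by rewrite mxE; apply: eq_bigr => i _; rewrite mxE.
split; last by move=> u v; rewrite !innerE trmx_mul !mulmxA -(mulmxA u) MMt mulmx1.
by exists (fun u => u *m M^T) => u /=; rewrite -mulmxA ?MMt ?(mulmx1C MMt) mulmx1.
Qed.

Lemma sum_sqr_int_eq1 n (F : 'I_n -> int) : \sum_i F i ^+ 2 = 1 ->
  exists i, exists e : bool, F i = (-1) ^+ e /\ forall j, j != i -> F j = 0.
Proof.
move=> sumF; have [i Fi_neq0] : exists i, F i != 0.
  apply/existsP; apply: contraT => /existsPn F0.
  have sum0 : \sum_i F i ^+ 2 = 0.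
    by apply: big1 => j _; rewrite (eqP (negbNE (F0 j))) expr0n.
  by move: sumF; rewrite sum0 => /eqP; rewrite eq_sym oner_eq0.
have sqrF_ge0 j : 0 <= F j ^+ 2 by rewrite sqr_ge0.
have rest_ge0 : 0 <= \sum_(j | j != i) F j ^+ 2 by apply: sumr_ge0.
have Fi_ge1 : 1 <= F i ^+ 2 by move/eqP: Fi_neq0; rewrite expr2; nia.
move: sumF; rewrite (bigD1 i) //=.
move: rest_ge0 Fi_ge1; set x := F i ^+ 2; set y := \sum_(j | _) _ => y_ge0 x_ge1 xy.
have rest0 : y = 0 by lia.
have Fi2 : (F i == 1) || (F i == -1) by rewrite -sqrf_eq1 -/x; apply/eqP; lia.
have rest j : j != i -> F j = 0.
  by move=> ji; apply/eqP; rewrite -sqrf_eq0 (psumr_eq0P (fun j _ => sqrF_ge0 j) rest0 ji).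
by exists i; case/orP: Fi2 => /eqP Fi; [exists false | exists true].
Qed.

Lemma isometry_signed_perm n (M : 'M[int]_n) :
  (forall u v : 'rV[int]_n, inner (u *m M) (v *m M) = inner u v) ->
  exists pi : 'I_n -> 'I_n, exists2 eps : 'I_n -> bool, injective pi &
    forall a b, M a b = if b == pi a then (-1) ^+ eps a else 0.
Proof.
move=> iso; have rowM a b : \sum_c M a c * M b c = (a == b)%:R.
  have := iso (delta_mx 0 a) (delta_mx 0 b); rewrite -!rowE /inner.
  under eq_bigr do rewrite !mxE; move=> ->.
  rewrite (bigD1 a) //= big1 => [|c /negbTE ca]; last by rewrite !mxE ca mul0r.
  by rewrite !mxE !eqxx mul1r addr0 eq_sym.
have /fin_all_exists [pi piP] : forall a, exists i, exists e : bool,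
    M a i = (-1) ^+ e /\ forall j, j != i -> M a j = 0.
  move=> a; apply: sum_sqr_int_eq1.
  by under eq_bigr do rewrite expr2; rewrite rowM eqxx.
have /fin_all_exists [eps epsP] := piP.
exists pi, eps; last first.
  by move=> a b; case: eqP => [->|/eqP]; [exact: (epsP a).1 | exact: (epsP a).2].
move=> a a' pi_aa'; apply/eqP; have := rowM a a'.
rewrite (bigD1 (pi a)) //= big1 ?addr0 => [|c /(epsP a).2 ->]; last by rewrite mul0r.
rewrite {2}pi_aa' (epsP a).1 (epsP a').1 -signr_addb.
by case: eqP => // _ /eqP; rewrite signr_eq0.
Qed.

Lemma eqn_modMl_coprime p u a b : coprime u p ->
  (u * a == u * b %[mod p])%N = (a == b %[mod p])%N.
Proof.
move=> cu; wlog le_ba : a b / (b <= a)%N.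
  by move=> IH; case/orP: (leq_total b a) => /IH //; rewrite eq_sym [in RHS]eq_sym.
by rewrite !eqn_mod_dvd ?leq_mul2l ?le_ba ?orbT // -mulnBr Gauss_dvdr // coprime_sym.
Qed.

Section AffineMod.
Variables (p : nat) (p_gt0 : (0 < p)%N).

Definition aff (u c : nat) (a : 'I_p) : 'I_p := Ordinal (ltn_pmod (u * a + c) p_gt0).

Definition affmx u c := fun_mx (aff u c).

Lemma aff_eqmod u u' c c' : (u = u' %[mod p])%N -> (c = c' %[mod p])%N ->
  aff u c =1 aff u' c'.
Proof.
move=> eu ec a; apply: val_inj => /=.
by rewrite -modnDm -modnMml eu ec modnMml modnDm.
Qed.

Lemma aff_comp u c u' c' : aff u' c' \o aff u c =1 aff (u * u') (c * u' + c').
Proof.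
move=> a; apply: val_inj => /=; rewrite -modnDml modnMmr modnDml.
by congr (_ %% p)%N; ring.
Qed.

Lemma aff10 : aff 1 0 =1 id.
Proof. by move=> a; apply: val_inj; rewrite /= mul1n addn0 modn_small. Qed.

Lemma aff_inj u c : coprime u p -> injective (aff u c).
Proof.
move=> cu a b /(congr1 val) /= /eqP; rewrite eqn_modDr eqn_modMl_coprime //.
by rewrite !modn_small // => /eqP /val_inj.
Qed.

Lemma aff_eqmodP u c u' c' : (1 < p)%N -> aff u c =1 aff u' c' ->
  (u = u' %[mod p])%N /\ (c = c' %[mod p])%N.
Proof.
move=> p_gt1 e; have /(congr1 val) /= := e (Ordinal p_gt0).
rewrite !muln0 !add0n => ec; split=> //.
have /(congr1 val) /= := e (Ordinal p_gt1); rewrite !muln1 => e1.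
by apply/eqP; rewrite -(eqn_modDr c) e1 -modnDmr -ec modnDmr.
Qed.

Lemma affmxE u c a b : affmx u c a b = (b == aff u c a)%:R.
Proof. exact: mxE. Qed.

Lemma affmx_eqmod u u' c c' : (u = u' %[mod p])%N -> (c = c' %[mod p])%N ->
  affmx u c = affmx u' c'.
Proof. by move=> eu ec; apply/eq_fun_mx/aff_eqmod. Qed.

Lemma mul_affmx u c u' c' :
  affmx u c *m affmx u' c' = affmx (u * u') (c * u' + c').
Proof. by rewrite mul_fun_mx; apply/eq_fun_mx/aff_comp. Qed.

Lemma affmx10 : affmx 1 0 = 1%:M.
Proof. by rewrite -fun_mx_id; apply/eq_fun_mx/aff10. Qed.

End AffineMod.

Lemma sum_fibres (V : nmodType) n (k : 'I_n -> 'I_n) (F : 'I_n -> V) :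
  \sum_a F (k a) = \sum_c F c *+ #|[pred a | k a == c]|.
Proof.
rewrite (partition_big k predT) //=; apply: eq_bigr => c _.
by rewrite -sumr_const; apply: eq_big => [a|a /eqP <-].
Qed.

Lemma fibres_eqmod_const n (k : 'I_n -> 'I_n) a1 a2 :
  a1 != a2 -> k a1 = k a2 ->
  (forall b c, #|[pred a | k a == b]| = #|[pred a | k a == c]| %[mod n])%N ->
  forall a, k a = k a1.
Proof.
move=> a12 k12 eqN; set N := fun c => #|[pred a | k a == c]|.
have sumN : (\sum_c N c = n)%N.
  rewrite -[RHS]card_ord -[RHS]sum1_card [RHS](partition_big k predT) //=.
  by apply: eq_bigr => c _; rewrite /N -sum1_card; apply: eq_bigl => a; rewrite !inE.
have N_le c : (N c <= n)%N by rewrite -sumN (bigD1 c) //= leq_addr.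
have N1_ge2 : (1 < N (k a1))%N.
  rewrite /N (cardD1 a1) (cardD1 a2) !inE eqxx -k12 eqxx.
  by rewrite [a2 == a1]eq_sym a12.
have N1_eq : N (k a1) = n.
  apply/eqP; rewrite eqn_leq N_le leqNgt; apply/negP => N1_lt.
  have N_ge2 c : (2 <= N c)%N.
    have := leq_mod (N c) n; rewrite (eqN c (k a1)) (modn_small N1_lt).
    by move=> ?; lia.
  have : (\sum_(c < n) 2 <= \sum_c N c)%N by apply: leq_sum => c _.
  by rewrite sumN sum_nat_const card_ord; lia.
have NC : (N (k a1) + #|[predC [pred a | k a == k a1]]| = n)%N.
  by rewrite /N cardC card_ord.
move=> a; apply/eqP.
have /card0_eq/(_ a) : #|[predC [pred a | k a == k a1]]| = 0%N by lia.
by rewrite !inE => /negbFE.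
Qed.

Lemma eqAmod_Frobenius p x y : prime p -> x \in Aint -> y \in Aint ->
  ((x + y) ^+ p == x ^+ p + y ^+ p %[mod p%:R])%A.
Proof.
move=> p_pr Ax Ay; have := prime_gt1 p_pr; case: p p_pr => [|[|n]] // p_pr _.
rewrite exprDn big_ord_recr big_ord_recl /= subnn subn0 !expr0 mulr1 mul1r.
rewrite bin0 binn !mulr1n eqAmodDr -[X in (_ == X %[mod _])%A]addr0 eqAmodDl.
rewrite eqAmod0 rpred_sum // => i _.
have /dvdnP [q ->] : (n.+2 %| 'C(n.+2, bump 0 i))%N.
  by apply: prime_dvd_bin => //=; rewrite ltnS.
(* [e] shields the modulus from [-mulr_natl]. *)
set e : algC := n.+2%:R; rewrite mulrnA -mulr_natl -eqAmod0.
by apply: eqAmodMr0; rewrite rpredMn // rpredM // rpredX.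
Qed.

Section PrimeCyclotomic.
Variables (p : nat) (z : algC).
Hypotheses (p_pr : prime p) (z_prim : p.-primitive_root z).

Lemma eqAmod_prim_root_sub1 k : (z ^+ k == 1 %[mod z - 1])%A.
Proof.
rewrite /eqAmod subrX1 -eqAmod0 eqAmodMr0 // rpred_sum // => i _.
exact/rpredX/(Aint_prim_root z_prim).
Qed.

Lemma eqAmod_prim_root_sub1X : ((z - 1) ^+ p == 0 %[mod p%:R])%A.
Proof.
have Am1 : -1 \in Aint by rewrite rpredN Aint1.
apply: eqAmod_trans (eqAmod_Frobenius p_pr (Aint_prim_root z_prim) Am1) _.
rewrite (prim_expr_order z_prim); have [-> | p_odd] := even_prime p_pr.
  by rewrite expr2 mulrNN mulr1.
by rewrite -signr_odd p_odd expr1 subrr.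
Qed.

Lemma prim_root_sub1_dvdn n : (z - 1 %| n%:R)%A -> (p %| n)%N.
Proof.
have z1 : z - 1 != 0.
  rewrite subr_eq0 -[z]expr1 -(expr0 z) (eq_prim_root_expr z_prim) mod0n.
  by rewrite modn_small ?prime_gt1.
rewrite unfold_in (negbTE z1) => An.
have := eqAmodMl (rpredX p An) eqAmod_prim_root_sub1X.
rewrite mulr0 -exprMn divfK // -natrX eqAmod0_nat Euclid_dvdX //.
by rewrite prime_gt0 // andbT.
Qed.

Lemma prim_root_sub1_eqmod m n :
  (m%:R == n%:R %[mod z - 1])%A -> (m = n %[mod p])%N.
Proof.
wlog le_nm : m n / (n <= m)%N.
  move=> IH; case/orP: (leq_total n m) => [/IH //|/IH eq_nm].
  by rewrite eqAmod_sym => /eq_nm.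
rewrite /eqAmod -natrB // => /prim_root_sub1_dvdn pd.
by apply/eqP; rewrite eqn_mod_dvd.
Qed.

Lemma sum_prim_root_expM m :
  \sum_(a < p) z ^+ (m * a) = if (p %| m)%N then p%:R else 0.
Proof.
rewrite (prim_order_dvd z_prim); under eq_bigr do rewrite exprM.
case: ifP => [/eqP zm1 | zm_neq1].
  by rewrite zm1; under eq_bigr do rewrite expr1n; rewrite sumr_const card_ord.
have : (z ^+ m - 1) * \sum_(a < p) (z ^+ m) ^+ a = 0.
  by rewrite -subrX1 -exprM mulnC exprM (prim_expr_order z_prim) expr1n subrr.
by move/eqP; rewrite mulf_eq0 subr_eq0 zm_neq1 => /eqP.
Qed.

Lemma prim_root_fourier_inv (F : 'I_p -> algC) (b : 'I_p) :
  \sum_(t < p) z ^+ ((p - b) * t) * \sum_(a < p) F a * z ^+ (a * t) = p%:R * F b.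
Proof.
have shift (a : 'I_p) : (p %| a + (p - b))%N = (a == b).
  rewrite /dvdn; have -> : 0%N = ((b + (p - b)) %% p)%N.
    by rewrite subnKC ?modnn // ltnW.
  by rewrite eqn_modDr !modn_small.
have inner a : \sum_(t < p) z ^+ ((p - b) * t) * (F a * z ^+ (a * t)) =
    F a * (if (p %| a + (p - b))%N then p%:R else 0).
  rewrite -sum_prim_root_expM mulr_sumr; apply: eq_bigr => t _.
  by rewrite mulrCA -exprD mulnDl addnC.
under eq_bigr do rewrite mulr_sumr; rewrite exchange_big /=.
under eq_bigr => a _ do rewrite inner shift.
rewrite (bigD1 b) //= eqxx big1 ?addr0 => [|a /negbTE ->]; last by rewrite mulr0.
by rewrite mulrC.
Qed.

Lemma inO_power_sums_fibres_eqmod (k : 'I_p -> 'I_p) :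
  (forall t : 'I_p, inO p ((\sum_a z ^+ (k a * t)) / p%:R)) ->
  forall b c, (#|[pred a | k a == b]| = #|[pred a | k a == c]| %[mod p])%N.
Proof.
move=> inO_w; set N := fun c => #|[pred a | k a == c]|.
have p_neq0 : (p%:R : algC) != 0 by rewrite pnatr_eq0 -lt0n prime_gt0.
have /fin_all_exists [m mP] := inO_w.
pose m' := (\prod_t m t)%N.
have m'_coprime : coprime m' p.
  apply: (big_ind (fun n => coprime n p)) => [|x y cx cy|t _]; last exact: (mP t).1.
    exact: coprime1n.
  by rewrite coprimeMl cx cy.
pose X (t : 'I_p) := m'%:R * ((\sum_a z ^+ (k a * t)) / p%:R).
have XA (t : 'I_p) : X t \in Aint.
  rewrite /X /m' (bigD1 t) //= natrM [(m t)%:R * _]mulrC -mulrA.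
  by apply: rpredM; [apply: rpred_nat | exact: (mP t).2].
have wE t : \sum_a z ^+ (k a * t) = \sum_c (N c)%:R * z ^+ (c * t).
  rewrite (sum_fibres k (fun c => z ^+ (c * t))).
  by apply: eq_bigr => c _; rewrite mulr_natl.
(* Fourier inversion expresses m' N_b through the algebraic integers X_t, with
   powers of z, all congruent to 1 mod z - 1, as coefficients. *)
have NE b : (m' * N b)%:R = \sum_(t < p) z ^+ ((p - b) * t) * X t.
  rewrite natrM -[(N b)%:R](mulKf p_neq0).
  rewrite -(prim_root_fourier_inv (fun c => (N c)%:R) b) !mulr_sumr.
  by apply: eq_bigr => t _; rewrite /X wE; field.
have NX b : ((m' * N b)%:R == \sum_(t < p) X t %[mod z - 1])%A.
  rewrite NE /eqAmod -sumrB rpred_sum // => t _.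
  by have := eqAmodMr (XA t) (eqAmod_prim_root_sub1 ((p - b) * t)); rewrite mul1r.
move=> b c; apply/eqP; rewrite -(eqn_modMl_coprime _ _ m'_coprime); apply/eqP.
by apply: prim_root_sub1_eqmod; rewrite (eqAmod_transl _ (NX b)) eqAmod_sym NX.
Qed.

End PrimeCyclotomic.

Section CyclicBlock.
Variables (p : nat) (gT : finGroupType) (G : {group gT}) (g : gT) (z : algC).
Hypotheses (p_pr : prime p) (defG : G = <[g]>%G) (oG : #|G| = p)
  (z_prim : p.-primitive_root z).

Let p_gt0 : (0 < p)%N := prime_gt0 p_pr.
Let p_gt1 : (1 < p)%N := prime_gt1 p_pr.
Let p_neq0 : p%:R != 0 :> algC.
Proof. by rewrite pnatr_eq0 -lt0n. Qed.

Local Notation aff := (aff p_gt0).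
Local Notation affmx := (affmx p_gt0).
Local Notation Imx c := (@Lmx gT G p g z (chi g z c)).
Local Notation Jmx := (@Amx gT G p g z).

Lemma order_gen : #[g]%g = p.
Proof. by rewrite -oG defG. Qed.

Lemma gen_in : g \in G.
Proof. by rewrite defG cycle_id. Qed.

Lemma expg_in n : (g ^+ n)%g \in G.
Proof. exact: groupX gen_in. Qed.

Lemma memG_expgP x : x \in G -> exists2 k, (k < p)%N & x = (g ^+ k)%g.
Proof.
rewrite defG => /cycleP [i ->]; exists (i %% p)%N; first by rewrite ltn_mod.
by rewrite -order_gen expg_mod_order.
Qed.

Lemma eq_expg_mod m n : ((g ^+ m)%g == (g ^+ n)%g) = (m == n %[mod p])%N.
Proof. by rewrite eq_expg_mod_order order_gen. Qed.

Lemma chi_expg (a : 'I_p) n : chi g z a (g ^+ n)%g = z ^+ (a * n).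
Proof.
rewrite /chi (bigD1 (Ordinal (ltn_pmod n p_gt0))) //= big1 => [|k /negbTE nk].
  rewrite eq_expg_mod modn_mod eqxx mul1r addr0 -(prim_expr_mod z_prim).
  by rewrite modnMmr (prim_expr_mod z_prim).
rewrite eq_expg_mod; case: eqP => [e|]; last by rewrite mul0r.
by case/eqP: nk; apply: val_inj; rewrite /= e modn_small.
Qed.

Lemma aut_expg t k : t \in Aut G -> t (g ^+ k)%g = (t g ^+ k)%g.
Proof. by move=> tA; rewrite -(autmE tA) morphX ?gen_in. Qed.

Lemma aut_gen_expg t : t \in Aut G -> exists2 v, coprime v p & t g = (g ^+ v)%g.
Proof.
move=> tA; have [v _ tg] := memG_expgP (Aut_closed tA gen_in); exists v => //.
rewrite coprime_sym prime_coprime //; apply/negP => p_dvd_v.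
have gv1 : (g ^+ v)%g = 1%g by apply/eqP; rewrite -order_dvdn order_gen.
have /perm_inj g1 : t g = t 1%g by rewrite tg gv1 -(autmE tA) morph1.
by move: p_gt1; rewrite -order_gen g1 order1.
Qed.

Lemma aut_gen_exists v : coprime v p -> exists2 t, t \in Aut G & t g = (g ^+ v)%g.
Proof.
move=> v_coprime; have v_unit : (v%:R : 'Z_#[g]%g) \is a GRing.unit.
  by rewrite unitZpE order_gen // coprime_sym.
exists (Zp_unitm (FinRing.unit 'Z_#[g]%g v_unit)); first by rewrite defG Aut_aut.
rewrite /Zp_unitm autE ?cycle_id //= /cyclem val_Zp_nat ?order_gen //.
by rewrite -order_gen expg_mod_order.
Qed.

Lemma Aut_eq_gen a b : a \in Aut G -> b \in Aut G -> a g = b g -> a = b.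
Proof.
move=> aA bA ab; apply: (eq_Aut aA bA) => x /memG_expgP [k _ ->].
by rewrite !aut_expg // ab.
Qed.

Lemma Lmx_affmx (lam : gT -> algC) c :
  (forall n, lam (g ^+ n)%g = z ^+ (c * n)) -> Lmx G g z lam = affmx 1 c.
Proof.
move=> lamE; apply/matrixP => a b; rewrite affmxE mxE.
suff -> : [forall h in G, lam h * chi g z a h == chi g z b h] = (b == aff 1 c a).
  by case: (b == _).
apply/forall_inP/eqP => [lamM | ->].
  have := lamM g gen_in; rewrite -(expg1 g) lamE !chi_expg !muln1 -exprD.
  rewrite (eq_prim_root_expr z_prim) => /eqP e; apply: val_inj.
  by rewrite /= mul1n addnC e modn_small.
move=> h /memG_expgP [k _ ->]; rewrite lamE !chi_expg -exprD.
by rewrite (eq_prim_root_expr z_prim) /= mul1n modnMml mulnDl addnC.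
Qed.

Lemma Amx_affmx s v : s \in Aut G -> (s^-1)%g g = (g ^+ v)%g ->
  Amx G g z s = affmx v 0.
Proof.
move=> sA sg; have siA : (s^-1)%g \in Aut G by rewrite groupV.
apply/matrixP => a b; rewrite affmxE mxE.
suff -> : [forall h in G, chi g z a ((s^-1)%g h) == chi g z b h] = (b == aff v 0 a).
  by case: (b == _).
apply/forall_inP/eqP => [sM | ->].
  have := sM g gen_in; rewrite sg -[in chi g z b g](expg1 g) !chi_expg muln1.
  rewrite (eq_prim_root_expr z_prim) => /eqP e; apply: val_inj.
  by rewrite /= addn0 mulnC e modn_small.
move=> h /memG_expgP [k _ ->]; rewrite aut_expg // sg -expgM !chi_expg.
by rewrite (eq_prim_root_expr z_prim) /= addn0 modnMml mulnA [(a * v)%N]mulnC.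
Qed.

Lemma Ichi_row_delta (M : 'M[int]_p) (a i : 'I_p) (k : int) n :
  (forall b, M a b = if b == i then k else 0) ->
  Ichi g z M a (g ^+ n)%g = k%:~R * z ^+ (i * n).
Proof. by move=> Ma; rewrite /Ichi (sum_row_delta _ Ma) chi_expg. Qed.

Lemma mu_sign_affmx (e : bool) u c i j :
  mu g z ((-1) ^+ e *: affmx u c) (g ^+ i)%g (g ^+ j)%g =
  (-1) ^+ e * z ^+ (c * i) * (if (p %| u * i + j)%N then p%:R else 0).
Proof.
rewrite /mu -(sum_prim_root_expM z_prim) mulr_sumr; apply: eq_bigr => a _.
rewrite (Ichi_row_delta _ (scale_fun_mxE _ _ a)) chi_expg rmorph_sign /=.
rewrite -(prim_expr_mod z_prim) modnMml (prim_expr_mod z_prim) -!mulrA -!exprD.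
by congr (_ * z ^+ _); ring.
Qed.

Lemma cent1_cyclic x : x \in G -> #|'C_G[x]%g| = p.
Proof.
move=> xG; rewrite -oG; congr #|pred_of_set _|; apply/setIidPl/subsetP => y yG.
apply/cent1P; have [i _ ->] := memG_expgP yG; have [k _ ->] := memG_expgP xG.
exact: commuteX2.
Qed.

Lemma p'_elt_expg i : (p^'.-elt (g ^+ i))%g = (p %| i)%N.
Proof.
rewrite /p_elt p'natE // orderXgcd order_gen.
have [p_dvd_i | p_ndvd_i] := boolP (p %| i)%N.
  by rewrite (gcdn_idPl p_dvd_i) divnn p_gt0 dvdn1 neq_ltn p_gt1 orbT.
have -> : gcdn p i = 1%N by apply/eqP; rewrite -/(coprime p i) prime_coprime.
by rewrite divn1 dvdnn.
Qed.

Lemma isPI_sign_affmx (e : bool) u c : coprime u p ->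
  isPI G g z ((-1) ^+ e *: affmx u c).
Proof.
move=> u_coprime.
have aff_inj_uc := aff_inj (p_gt0 := p_gt0) (c := c) u_coprime.
have [bij iso] := orthogonal_isometry (sign_orthogonal e (fun_mx_orthogonal aff_inj_uc)).
split=> // x y /memG_expgP [i _ ->] /memG_expgP [j _ ->].
rewrite !cent1_cyclic ?expg_in // mu_sign_affmx.
have muO : inO p ((-1) ^+ e * z ^+ (c * i) *
    (if (p %| u * i + j)%N then p%:R else 0) / p%:R).
  exists 1%N; split; first exact: coprime1n.
  rewrite mul1r; case: ifP => _; last by rewrite mulr0 mul0r rpred0.
  by rewrite mulfK // rpredM ?rpred_sign // rpredX // (Aint_prim_root z_prim).
split=> //; case: ifP => [p_dvd _ | _]; last by rewrite mulr0 eqxx.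
rewrite !p'_elt_expg; apply/idP/idP => [p_dvd_i | p_dvd_j].
  by rewrite -(dvdn_addr _ (dvdn_mull u p_dvd_i)).
by move: p_dvd; rewrite (dvdn_addl _ p_dvd_j) Gauss_dvdr // coprime_sym.
Qed.

Lemma perfect_sign_const (M : 'M[int]_p) (pi : 'I_p -> 'I_p) (eps : 'I_p -> bool) :
  (forall a b, M a b = if b == pi a then (-1) ^+ eps a else 0) ->
  perfect G g z M -> forall a a', eps a = eps a'.
Proof.
move=> ME perf.
have mu1E (j : nat) : mu g z M 1%g (g ^+ j)%g = \sum_a (-1) ^+ eps a * z ^+ (a * j).
  rewrite /mu; apply: eq_bigr => a _.
  by rewrite -(expg0 g) (Ichi_row_delta _ (ME a)) chi_expg muln0 expr0 mulr1 rmorph_sign.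
have mu1_eq0 (j : 'I_p) : (0 < j)%N -> mu g z M 1%g (g ^+ j)%g = 0.
  move=> j_gt0; have [_ _ reg] := perf _ _ (group1 G) (expg_in j).
  case: (eqVneq (mu g z M 1%g (g ^+ j)%g) 0) => // /reg.
  by rewrite p_elt1 p'_elt_expg gtnNdvd.
have mu11E b : p%:R * (-1) ^+ eps b = mu g z M 1%g 1%g.
  rewrite -(prim_root_fourier_inv z_prim (fun a => (-1) ^+ eps a)).
  under eq_bigr do rewrite -mu1E.
  rewrite (bigD1 (Ordinal p_gt0)) //= big1 ?addr0 => [|j j_neq0].
    by rewrite muln0 expr0 mul1r expg0.
  rewrite mu1_eq0 ?mulr0 // lt0n; apply: contra j_neq0 => /eqP j0.
  by apply/eqP/val_inj.
by move=> a a'; apply: (@signr_inj algC); apply: (mulfI p_neq0); rewrite !mu11E.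
Qed.

Lemma perfect_twisted_sums_inO e pi j (t : 'I_p) :
  perfect G g z ((-1) ^+ e *: fun_mx pi) ->
  inO p ((\sum_a z ^+ (aff j (pi a) a * t)) / p%:R).
Proof.
move=> perf; have [+ _ _] := perf _ _ (expg_in t) (expg_in (j * t)).
have -> : mu g z ((-1) ^+ e *: fun_mx pi) (g ^+ t)%g (g ^+ (j * t))%g =
    (-1) ^+ e * \sum_a z ^+ (aff j (pi a) a * t).
  rewrite /mu mulr_sumr; apply: eq_bigr => a _.
  rewrite (Ichi_row_delta _ (scale_fun_mxE _ _ a)) chi_expg rmorph_sign.
  rewrite -mulrA -exprD /= -[in RHS](prim_expr_mod z_prim) modnMml.
  by rewrite (prim_expr_mod z_prim); congr (_ * z ^+ _); ring.
rewrite cent1_cyclic ?expg_in // -mulrA => -[m [m_coprime mA]].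
by exists m; split=> //; move: mA; rewrite mulrCA rpredMsign.
Qed.

Lemma perfect_sign_fun_mx_affine e pi : injective pi ->
  perfect G g z ((-1) ^+ e *: fun_mx pi) ->
  exists2 u, coprime u p & pi =1 aff u (pi (Ordinal p_gt0)).
Proof.
move=> pi_inj perf; set o0 : 'I_p := Ordinal p_gt0; set o1 : 'I_p := Ordinal p_gt1.
have pi_lt a : (pi a < p)%N := ltn_ord (pi a).
set j := (pi o0 + (p - pi o1))%N; set u := (pi o1 + p - pi o0)%N.
have ju : (j + u = p * 2)%N by rewrite /j /u; have := pi_lt o0; have := pi_lt o1; lia.
(* j is chosen so that k 1 = k 0; the fibre count then makes k constant. *)
pose k a := aff j (pi a) a.
have k10 : k o1 = k o0.
  apply: val_inj; rewrite /= muln1 muln0 add0n [RHS]modn_small //.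
  have -> : (j + pi o1 = pi o0 + p)%N by rewrite /j; have := pi_lt o1; lia.
  by rewrite modnDr modn_small.
have inO_k (t : 'I_p) : inO p ((\sum_a z ^+ (k a * t)) / p%:R).
  exact: perfect_twisted_sums_inO perf.
have o10 : o1 != o0 by [].
have k_const := fibres_eqmod_const o10 k10 (inO_power_sums_fibres_eqmod p_pr z_prim inO_k).
have piE a : pi a = aff u (pi o0) a.
  apply: val_inj => /=; have /(congr1 val) /= := etrans (k_const a) k10.
  rewrite muln0 add0n (modn_small (pi_lt o0)) => <-; rewrite modnDmr.
  have -> : (u * a + (j * a + pi a) = a * 2 * p + pi a)%N.
    by rewrite addnA -mulnDl [(u + j)%N]addnC ju; ring.
  by rewrite modnMDl modn_small.
exists u => //; rewrite coprime_sym prime_coprime //; apply: contra o10 => p_dvd_u.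
apply/eqP/pi_inj/val_inj; rewrite piE /= muln1 -modnDml (eqP p_dvd_u) add0n.
by rewrite modn_small.
Qed.

Lemma isPI_sign_affmxP M : isPI G g z M ->
  exists e : bool, exists2 u, coprime u p & exists c, M = (-1) ^+ e *: affmx u c.
Proof.
case=> _ iso perf; have [pi [eps pi_inj ME]] := isometry_signed_perm iso.
set e := eps (Ordinal p_gt0).
have M_fun : M = (-1) ^+ e *: fun_mx pi.
  apply/matrixP => a b; rewrite ME scale_fun_mxE.
  by rewrite (perfect_sign_const ME perf a (Ordinal p_gt0)).
rewrite M_fun in perf; have [u u_coprime piE] := perfect_sign_fun_mx_affine pi_inj perf.
by exists e, u => //; exists (pi (Ordinal p_gt0)); rewrite M_fun (eq_fun_mx piE).
Qed.

Lemma Lmx_chi_affmx (c : 'I_p) : Imx c = affmx 1 c.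
Proof. by apply: Lmx_affmx => n; rewrite chi_expg. Qed.

Lemma aut_Amx_affmx s : s \in Aut G ->
  exists2 v, coprime v p & Jmx s = affmx v 0 /\ (s^-1)%g g = (g ^+ v)%g.
Proof.
move=> sA; have [v v_coprime sg] := aut_gen_expg (groupVr sA).
by exists v => //; split=> //; apply: Amx_affmx.
Qed.

Lemma Lmx_isPI (c : 'I_p) : isPI G g z (Imx c).
Proof.
by have := isPI_sign_affmx false c (coprime1n p); rewrite expr0 scale1r Lmx_chi_affmx.
Qed.

Lemma Amx_isPI : {in Aut G, forall s, isPI G g z (Jmx s)}.
Proof.
move=> s sA; have [v v_coprime [-> _]] := aut_Amx_affmx sA.
by have := isPI_sign_affmx false 0 v_coprime; rewrite expr0 scale1r.
Qed.

Lemma isPI_N1 : isPI G g z (- 1%:M : 'M[int]_p).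
Proof.
by have := isPI_sign_affmx true 0 (coprime1n p); rewrite affmx10 expr1 scaleN1r.
Qed.

Lemma Lmx_chiM (c d : 'I_p) :
  Lmx G g z (fun h => chi g z c h * chi g z d h) = Imx c *m Imx d.
Proof.
rewrite !Lmx_chi_affmx mul_affmx !muln1; apply: Lmx_affmx => n.
by rewrite !chi_expg -exprD mulnDl.
Qed.

Lemma Lmx_chi_inj (c d : 'I_p) : Imx c = Imx d -> c = d.
Proof.
rewrite !Lmx_chi_affmx => /fun_mx_inj/(aff_eqmodP p_gt1) [_].
by rewrite !modn_small // => /val_inj.
Qed.

Lemma AmxM : {in Aut G &, forall s t, Jmx (s * t)%g = Jmx s *m Jmx t}.
Proof.
move=> s t sA tA; have [vs _ [-> sg]] := aut_Amx_affmx sA.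
have [vt _ [-> tg]] := aut_Amx_affmx tA.
rewrite mul_affmx mul0n addn0 (Amx_affmx (v := vs * vt) (groupM sA tA)) //.
by rewrite invMg permM tg aut_expg ?groupV // sg -expgM.
Qed.

Lemma Amx_inj : {in Aut G &, injective Jmx}.
Proof.
move=> s t sA tA; have [vs _ [-> sg]] := aut_Amx_affmx sA.
have [vt _ [-> tg]] := aut_Amx_affmx tA.
move=> /fun_mx_inj/(aff_eqmodP p_gt1) [vst _].
apply: invg_inj; apply: Aut_eq_gen; rewrite ?groupV // sg tg.
by apply/eqP; rewrite eq_expg_mod vst.
Qed.

Lemma Amx_conj_Lmx (c : 'I_p) : {in Aut G, forall s,
  exists d : 'I_p, Jmx (s^-1)%g *m Imx c *m Jmx s = Imx d}.
Proof.
move=> s sA; have [v _ [-> sg]] := aut_Amx_affmx sA.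
have [v' _ [-> s'g]] := aut_Amx_affmx (groupVr sA); rewrite invgK in s'g.
have vv' : (v' * v = 1 %[mod p])%N.
  apply/eqP; rewrite -eq_expg_mod expg1 expgM -s'g -aut_expg // -sg.
  by rewrite -permM mulVg perm1.
exists (Ordinal (ltn_pmod (c * v) p_gt0)); rewrite !Lmx_chi_affmx !mul_affmx.
apply: affmx_eqmod => /=; first by rewrite muln1.
by rewrite muln1 add0n addn0 modn_mod.
Qed.

Lemma Lmx_eq_Amx (c : 'I_p) :
  {in Aut G, forall s, Imx c = Jmx s -> Imx c = 1%:M}.
Proof.
move=> s sA; have [v _ [-> _]] := aut_Amx_affmx sA; rewrite Lmx_chi_affmx.
move=> /fun_mx_inj/(aff_eqmodP p_gt1) [_ c0].
by rewrite (affmx_eqmod p_gt0 (erefl (1 %% p)%N) c0) affmx10.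
Qed.

Lemma N1_neq1 : (- 1%:M : 'M[int]_p) != 1%:M.
Proof.
apply/eqP => /matrixP /(_ (Ordinal p_gt0) (Ordinal p_gt0)).
by rewrite !mxE eqxx /= => /eqP.
Qed.

Lemma LmxAmx_neqN1 (c : 'I_p) : {in Aut G, forall s, Imx c *m Jmx s != - 1%:M}.
Proof.
move=> s sA; have [v _ [-> _]] := aut_Amx_affmx sA; rewrite Lmx_chi_affmx mul_affmx.
apply/eqP => /matrixP /(_ (Ordinal p_gt0) (Ordinal p_gt0)).
by rewrite affmxE !mxE eqxx /=; case: eqP.
Qed.

Lemma LmxAmx_affmx u c : coprime u p -> exists d : 'I_p, exists2 s, s \in Aut G &
  Imx d *m Jmx s = affmx u c.
Proof.
move=> u_coprime; have [t tA tg] := aut_gen_exists u_coprime.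
have [inv _ invK] := injF_bij (aff_inj (p_gt0 := p_gt0) (c := 0) u_coprime).
set c' : 'I_p := Ordinal (ltn_pmod c p_gt0).
exists (inv c'), (t^-1)%g; first by rewrite groupV.
rewrite Lmx_chi_affmx (Amx_affmx (v := u) (groupVr tA)) ?invgK // mul_affmx mul1n.
apply: affmx_eqmod => //; have /(congr1 val) /= := invK c'.
by move=> inv_c; rewrite mulnC.
Qed.

Lemma isPI_LmxAmxP M : isPI G g z M <->
  exists c : 'I_p, exists2 s, s \in Aut G & exists e : bool,
    M = (-1) ^+ e *: (Imx c *m Jmx s).
Proof.
split=> [/isPI_sign_affmxP [e [u u_coprime [c ->]]] | [c [s sA [e ->]]]].
  have [d [s sA dsE]] := LmxAmx_affmx c u_coprime.
  by exists d, s => //; exists e; rewrite dsE.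
have [v v_coprime [-> _]] := aut_Amx_affmx sA.
by rewrite Lmx_chi_affmx mul_affmx mul1n; apply: isPI_sign_affmx.
Qed.

Lemma isPI_allposP M : isPI G g z M /\ allpos M <->
  exists c : 'I_p, exists2 s, s \in Aut G & M = Imx c *m Jmx s.
Proof.
split=> [[/isPI_sign_affmxP [e [u u_coprime [c ME]]] Mpos] | [c [s sA ME]]].
  have e0 : e = false.
    have [b /(_ (aff u c (Ordinal p_gt0)))] := Mpos (Ordinal p_gt0).
    rewrite ME scale_fun_mxE eqxx.
    by case: e {ME} => //; rewrite expr1; case: eqP.
  have [d [s sA dsE]] := LmxAmx_affmx c u_coprime.
  by exists d, s => //; rewrite ME e0 expr0 scale1r dsE.
split; first by apply/isPI_LmxAmxP; exists c, s => //; exists false; rewrite expr0 scale1r.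
have [v _ [AmxE _]] := aut_Amx_affmx sA; rewrite ME Lmx_chi_affmx AmxE mul_affmx.
by move=> a; exists (aff (1 * v) (c * v + 0) a) => b; rewrite affmxE.
Qed.

Definition dlog x : 'I_p := odflt (Ordinal p_gt0) [pick k : 'I_p | x == (g ^+ k)%g].

Lemma dlogK x : x \in G -> (g ^+ dlog x)%g = x.
Proof.
move=> xG; rewrite /dlog; case: pickP => [k /eqP -> //| no_k].
by have [k k_lt xE] := memG_expgP xG; have := no_k (Ordinal k_lt); rewrite /= xE eqxx.
Qed.

Lemma dlog_expg n : (dlog (g ^+ n)%g : nat) = (n %% p)%N.
Proof.
have /eqP := dlogK (expg_in n); rewrite eq_expg_mod => /eqP <-.
by rewrite modn_small.
Qed.

Lemma dlog_ord (c : 'I_p) : dlog (g ^+ c)%g = c.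
Proof. by apply: val_inj => /=; rewrite dlog_expg modn_small. Qed.

Lemma dlog_inj : {in G &, injective dlog}.
Proof. by move=> x y xG yG xy; rewrite -(dlogK xG) -(dlogK yG) xy. Qed.

Lemma dlogM x y : x \in G -> y \in G ->
  (dlog (x * y)%g : nat) = ((dlog x + dlog y) %% p)%N.
Proof.
by move=> xG yG; rewrite -{1}(dlogK xG) -{1}(dlogK yG) -expgD dlog_expg.
Qed.

Lemma dlog_aut a x : a \in Aut G -> x \in G ->
  (dlog (a x) : nat) = ((dlog (a g) * dlog x) %% p)%N.
Proof.
move=> aA xG; rewrite -{1}(dlogK xG) aut_expg // -{1}(dlogK (Aut_closed aA gen_in)).
by rewrite -expgM dlog_expg.
Qed.

Lemma chi_dlogM : {in G &, forall x y, {in G, forall h,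
  chi g z (dlog (x * y)%g) h = chi g z (dlog x) h * chi g z (dlog y) h}}.
Proof.
move=> x y xG yG h /memG_expgP [m _ ->]; rewrite !chi_expg dlogM // -exprD.
by rewrite -(prim_expr_mod z_prim) modnMml (prim_expr_mod z_prim) mulnDl.
Qed.

Lemma Lmx_chi_dlogM :
  {in G &, forall x y, Imx (dlog (x * y)%g) = Imx (dlog x) *m Imx (dlog y)}.
Proof.
move=> x y xG yG; rewrite !Lmx_chi_affmx mul_affmx !muln1; apply: affmx_eqmod => //.
by rewrite dlogM // modn_mod.
Qed.

Lemma sdprod_by_mem (w : sdprod_by (aut_groupAction G)) : w.1 \in Aut G /\ w.2 \in G.
Proof. by case: w => [[a x]] /= /setXP. Qed.

Definition sd_mx (w : sdprod_by (aut_groupAction G)) : 'M[int]_p :=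
  affmx (dlog (w.1 g)) (dlog w.2).

Lemma sd_mxM w1 w2 : sd_mx (w1 * w2)%g = sd_mx w1 *m sd_mx w2.
Proof.
have [a1A x1G] := sdprod_by_mem w1; have [a2A x2G] := sdprod_by_mem w2.
have mul1 : ((w1 * w2)%g).1 = (w1.1 * w2.1)%g := erefl.
have mul2 : ((w1 * w2)%g).2 = (w2.1 w1.2 * w2.2)%g := erefl.
rewrite /sd_mx mul_affmx mul1 mul2; apply: affmx_eqmod.
  by rewrite permM dlog_aut ?Aut_closed ?gen_in // modn_mod mulnC.
by rewrite dlogM ?Aut_closed // dlog_aut // modn_mod modnDml mulnC.
Qed.

Lemma sd_aff_inj (w1 w2 : sdprod_by (aut_groupAction G)) :
  aff (dlog (w1.1 g)) (dlog w1.2) =1 aff (dlog (w2.1 g)) (dlog w2.2) -> w1 = w2.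
Proof.
have [a1A x1G] := sdprod_by_mem w1; have [a2A x2G] := sdprod_by_mem w2.
case/(aff_eqmodP p_gt1); rewrite !modn_small // => /val_inj da /val_inj dx.
have a12 : w1.1 = w2.1.
  apply: Aut_eq_gen => //; rewrite -(dlogK (Aut_closed a1A gen_in)) da.
  by rewrite dlogK ?Aut_closed ?gen_in.
by apply: val_inj; apply: injective_projections => //=; apply: dlog_inj.
Qed.

Definition sign_sd_mx (w : sdprod_by (aut_groupAction G) * 'Z_2) : 'M[int]_p :=
  (-1) ^+ w.2 *: sd_mx w.1.

Lemma sign_sd_mxM w1 w2 : sign_sd_mx (w1 * w2)%g = sign_sd_mx w1 *m sign_sd_mx w2.
Proof.
case: w1 w2 => [w1 e1] [w2 e2]; rewrite /sign_sd_mx /= sd_mxM.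
rewrite -scalemxAl -scalemxAr scalerA -exprD -signr_odd odd_mod //.
by rewrite signr_odd.
Qed.

Lemma sign_sd_mx_inj : injective sign_sd_mx.
Proof.
move=> [w1 e1] [w2 e2]; rewrite /sign_sd_mx /= -(signr_odd _ e1) -(signr_odd _ e2).
case/(sign_fun_mx_inj p_gt0) => odd12 /sd_aff_inj ->; congr (_, _).
apply: val_inj; move: odd12 (ltn_ord e1) (ltn_ord e2) => /=.
by case: (nat_of_ord e1) => [|[|]] //; case: (nat_of_ord e2) => [|[|]].
Qed.

Lemma isPI_sign_sd_mxP M : isPI G g z M <-> exists w, sign_sd_mx w = M.
Proof.
split=> [/isPI_sign_affmxP [e [u u_coprime [c ->]]] | [[w e] <-]].
  have [a aA ag] := aut_gen_exists u_coprime.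
  have aX : (a, (g ^+ c)%g) \in setX (Aut G) G by apply/setXP; rewrite aA expg_in.
  have e_lt2 : ((e : nat) < 2)%N by case: e.
  exists (SdPair (aut_groupAction G) aX, Ordinal e_lt2 : 'Z_2).
  rewrite /sign_sd_mx /sd_mx /= ag; congr (_ *: _).
  by apply: affmx_eqmod; rewrite dlog_expg modn_mod.
have [aA _] := sdprod_by_mem w; have [v v_coprime ag] := aut_gen_expg aA.
rewrite /sign_sd_mx /sd_mx /= -signr_odd; apply: isPI_sign_affmx.
by rewrite ag dlog_expg coprime_modl.
Qed.

End CyclicBlock.

Theorem mainTheorem13 (p : nat) (gT : finGroupType) (G : {group gT}) (g : gT)
  (z : algC) :
  prime p -> G = <[g]>%G -> #|G| = p -> p.-primitive_root z ->
  let PI := @isPI gT G p g z in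
  let I_ (c : 'I_p) := @Lmx gT G p g z (chi g z c) in
  let J_ := @Amx gT G p g z in
  [/\
   (* L, A and <-id> consist of perfect isometries *)
   [/\ forall c, PI (I_ c),
       {in Aut G, forall s, PI (J_ s)}
     & PI (- 1%:M)],
   (* L = {I_lambda} is isomorphic to Irr(B) via lambda |-> I_lambda *)
   [/\ forall c d, @Lmx gT G p g z (fun h => chi g z c h * chi g z d h) = I_ c *m I_ d
     & forall c d, I_ c = I_ d -> c = d],
   (* A = {I_sigma} is isomorphic to Aut(G) via sigma |-> I_sigma *)
   [/\ {in Aut G &, forall s t, J_ (s * t)%g = J_ s *m J_ t}
     & {in Aut G &, injective J_}],
   (* internal semidirect product L >| A, and direct factor <-id> *)
   [/\ forall c, {in Aut G, forall s, exists d, J_ (s^-1)%g *m I_ c *m J_ s = I_ d},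
       (forall c, {in Aut G, forall s, I_ c = J_ s -> I_ c = 1%:M}),
       (- 1%:M : 'M[int]_p) != 1%:M,
       (forall c, {in Aut G, forall s, I_ c *m J_ s != - 1%:M})
     & (forall M, PI M -> M *m (- 1%:M) = (- 1%:M) *m M)]
 & [/\
   (* PI(B) = (L >| A) x <-id> *)
   (forall M, PI M <-> exists c, exists2 s, s \in Aut G &
        exists e : bool, M = (- 1) ^+ e *: (I_ c *m J_ s)),
   (* L >| A = perfect isometries with all-positive sign *)
   (forall M, (PI M /\ allpos M) <-> exists c, exists2 s, s \in Aut G &
        M = I_ c *m J_ s),
   (* L ~= Irr(B) ~= G *)
   [/\ exists psi : gT -> 'I_p, {in G &, injective psi} /\
         {in G &, forall x y, {in G, forall h,
            chi g z (psi (x * y)%g) h = chi g z (psi x) h * chi g z (psi y) h}}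
     & exists phi : gT -> 'M[int]_p, [/\ {in G &, injective phi},
         {in G &, forall x y, phi (x * y)%g = phi x *m phi y}
       & forall M, (exists c, M = I_ c) <-> exists2 x, x \in G & phi x = M]]
   (* PI(B) ~= (G >| Aut(G)) x C_2 *)
 & exists f : (sdprod_by (aut_groupAction G) * 'Z_2)%type -> 'M[int]_p,
     [/\ injective f,
         forall u v, f (u * v)%g = f u *m f v
       & forall M, PI M <-> exists u, f u = M]]].
Proof.
move=> p_pr defG oG z_prim PI I_ J_.
split; [split | split | split | split | split; [| | split |]].
- exact: Lmx_isPI.
- exact: Amx_isPI.
- exact: isPI_N1.
- exact: Lmx_chiM.
- exact: Lmx_chi_inj.
- exact: AmxM.
- exact: Amx_inj.
- exact: Amx_conj_Lmx.
- exact: Lmx_eq_Amx.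
- exact: N1_neq1.
- exact: LmxAmx_neqN1.
- by move=> M _; rewrite mulmxN mulNmx mulmx1 mul1mx.
- exact: isPI_LmxAmxP.
- exact: isPI_allposP.
- exists (dlog g p_pr); split=> [x y xG yG | x y xG yG h hG].
    exact: (dlog_inj defG oG xG yG).
  exact: (chi_dlogM p_pr defG oG z_prim xG yG hG).
- exists (fun x => I_ (dlog g p_pr x)); split.
  + move=> x y xG yG /(Lmx_chi_inj p_pr defG oG z_prim).
    exact: (dlog_inj defG oG xG yG).
  + move=> x y xG yG; exact: (Lmx_chi_dlogM p_pr defG oG z_prim xG yG).
  + move=> M; split=> [[c ->] | [x _ <-]]; last by exists (dlog g p_pr x).
    by exists (g ^+ c)%g; [exact: expg_in | rewrite /= (dlog_ord p_pr defG oG)].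
- exists (sign_sd_mx g p_pr); split.
  + exact: sign_sd_mx_inj.
  + exact: sign_sd_mxM.
  + exact: isPI_sign_sd_mxP.
Qed.
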